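(* Let $\mathfrak g$ be a Lie algebra in which every abelian ideal is central. Then: (a) every nilpotent ideal $\mathfrak n$ of $\mathfrak g$ satisfies $C^2(\mathfrak n)\subseteq\mathfrak z(\mathfrak g)$ and $C^3(\mathfrak n)=\{0\}$; (b) if $\mathfrak r$ is a solvable ideal of $\mathfrak g$ and $n\in\mathbb N_0$ is maximal with $D^n(\mathfrak r)\neq\{0\}$, then $D^n(\mathfrak r)$ is central in $\mathfrak g$; (c) the center of the Lie algebra $\mathrm{ad}\,\mathfrak g$ is trivial, $\mathfrak z(\mathrm{ad}\,\mathfrak g)=\{0\}$; (d) if $\mathfrak g$ is nilpotent, then $\mathfrak g$ is abelian.
   Context: For a Lie algebra $\mathfrak h$: the derived series is $D^0(\mathfrak h)=\mathfrak h$, $D^{n+1}(\mathfrak h)=[D^n(\mathfrak h),D^n(\mathfrak h)]$; the descending central series is $C^1(\mathfrak h)=\mathfrak h$, $C^{n+1}(\mathfrak h)=[\mathfrak h,C^n(\mathfrak h)]$. $\mathfrak z(\mathfrak g)$ denotes the center of $\mathfrak g$. *)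

From HB Require Import structures.
From mathcomp Require Import all_boot all_algebra.
Set Implicit Arguments. Unset Strict Implicit. Unset Printing Implicit Defensive.
Import GRing.Theory.
Local Open Scope ring_scope.

Definition is_lie (K : fieldType) (V : lmodType K) (br : V -> V -> V) : Prop :=
  [/\ (forall a x y z, br (a *: x + y) z = a *: br x z + br y z),
      (forall a x y z, br x (a *: y + z) = a *: br x y + br x z),
      (forall x, br x x = 0) &
      (forall x y z, br x (br y z) + br y (br z x) + br z (br x y) = 0)].

Definition subspace (K : fieldType) (V : lmodType K) (S : V -> Prop) : Prop :=
  [/\ S 0, (forall x y, S x -> S y -> S (x + y)) &
      (forall (a : K) x, S x -> S (a *: x))].

Definition sub_set (V : Type) (A B : V -> Prop) : Prop := forall x, A x -> B x.

Definition is_zero (V : zmodType) (S : V -> Prop) : Prop := forall x, S x <-> x = 0.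

Definition ideal (K : fieldType) (V : lmodType K) (br : V -> V -> V) (I : V -> Prop) : Prop :=
  subspace I /\ (forall x y, I y -> I (br x y)).

(* [A, B] = linear span of {br a b | a in A, b in B} (smallest subspace containing them) *)
Definition brsub (K : fieldType) (V : lmodType K) (br : V -> V -> V)
    (A B : V -> Prop) : V -> Prop :=
  fun v => forall S : V -> Prop, subspace S ->
    (forall a b, A a -> B b -> S (br a b)) -> S v.

Fixpoint derived (K : fieldType) (V : lmodType K) (br : V -> V -> V)
    (h : V -> Prop) (n : nat) : V -> Prop :=
  match n with
  | 0 => h
  | n'.+1 => brsub br (derived br h n') (derived br h n')
  end.

(* descending central series: C^1 h = h, C^(n+1) h = [h, C^n h]; we set C^0 h = h too *)
Fixpoint lcs (K : fieldType) (V : lmodType K) (br : V -> V -> V)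
    (h : V -> Prop) (n : nat) : V -> Prop :=
  match n with
  | 0 | 1 => h
  | n'.+1 => brsub br h (lcs br h n')
  end.

Definition center (K : fieldType) (V : lmodType K) (br : V -> V -> V) : V -> Prop :=
  fun z => forall y, br z y = 0.

Definition abelian_sub (V : zmodType) (br : V -> V -> V) (I : V -> Prop) : Prop :=
  forall a b, I a -> I b -> br a b = 0.

Definition solvable_sub (K : fieldType) (V : lmodType K) (br : V -> V -> V)
    (h : V -> Prop) : Prop := exists n, is_zero (derived br h n).

Definition nilpotent_sub (K : fieldType) (V : lmodType K) (br : V -> V -> V)
    (h : V -> Prop) : Prop := exists n, (1 <= n)%N /\ is_zero (lcs br h n).

Definition ad (V : Type) (br : V -> V -> V) (x : V) : V -> V := br x.

(* center of ad g (the Lie algebra of the maps ad x, with commutator bracket) is {0} *)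
Definition ad_center_trivial (K : fieldType) (V : lmodType K) (br : V -> V -> V) : Prop :=
  forall x : V,
    (forall y : V, (fun v => ad br x (ad br y v) - ad br y (ad br x v)) = (fun _ => 0)) ->
    ad br x = (fun _ => 0).

From HB Require Import structures.
From mathcomp Require Import all_boot all_algebra.
From Stdlib Require Import Classical FunctionalExtensionality.
Set Implicit Arguments. Unset Strict Implicit. Unset Printing Implicit Defensive.
Import GRing.Theory.
Local Open Scope ring_scope.

(* By Jacobi, [C^2 n, C^k n] <= C^(k+2) n.  Hence if C^(k+2) n = 0 for some
   k >= 2, the ideal C^k n is abelian, so central, and C^(k+1) n = [n, C^k n]
   = 0; descending from any vanishing term gives C^3 n = 0, and then C^2 n is
   abelian, hence central.  The last nonzero derived ideal is abelian, hence
   central.  If [ad x, ad g] = 0 then [x, g] is central, so K x + z(g) is an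
   abelian ideal and x is central.  Finally, for g nilpotent [x, g] <= C^2 g
   is central for every x. *)

Section LieBracket.
Variables (K : fieldType) (V : lmodType K) (br : V -> V -> V).
Hypothesis hL : is_lie br.

Lemma brDl x y z : br (x + y) z = br x z + br y z.
Proof. by case: hL => h _ _ _; have := h 1 x y z; rewrite !scale1r. Qed.

Lemma brDr x y z : br z (x + y) = br z x + br z y.
Proof. by case: hL => _ h _ _; have := h 1 z x y; rewrite !scale1r. Qed.

Lemma br0l z : br 0 z = 0.
Proof. by apply: (addrI (br 0 z)); rewrite -brDl !addr0. Qed.

Lemma br0r z : br z 0 = 0.
Proof. by apply: (addrI (br z 0)); rewrite -brDr !addr0. Qed.

Lemma brZl a x z : br (a *: x) z = a *: br x z.
Proof. by case: hL => h _ _ _; rewrite -[a *: x]addr0 h br0l addr0. Qed.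

Lemma brZr a x z : br z (a *: x) = a *: br z x.
Proof. by case: hL => _ h _ _; rewrite -[a *: x]addr0 h br0r addr0. Qed.

Lemma brxx x : br x x = 0.
Proof. by case: hL. Qed.

Lemma brC x y : br x y = - br y x.
Proof.
apply/eqP; rewrite -addr_eq0.
by have := brxx (x + y); rewrite brDl !brDr !brxx add0r addr0 => ->.
Qed.

Lemma brNr x z : br z (- x) = - br z x.
Proof. by rewrite -scaleN1r brZr scaleN1r. Qed.

Lemma br_jacobi x a b : br x (br a b) = br (br x a) b + br a (br x b).
Proof.
case: hL => _ _ _ jac; move/eqP: (jac x a b); rewrite -addrA addr_eq0 => /eqP ->.
by rewrite opprD (brC b (br x a)) opprK (brC b x) brNr opprK addrC.
Qed.

Lemma br_commutator x y v : br (br x y) v = br x (br y v) - br y (br x v).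
Proof. by rewrite br_jacobi addrK. Qed.

Section SubspaceTheory.
Variable S : V -> Prop.
Hypothesis hS : subspace S.

Lemma subspace0 : S 0. Proof. by case: hS. Qed.

Lemma subspaceD x y : S x -> S y -> S (x + y). Proof. by case: hS => _ + _; apply. Qed.

Lemma subspaceZ a x : S x -> S (a *: x). Proof. by case: hS => _ _; apply. Qed.

Lemma subspaceN x : S x -> S (- x).
Proof. by rewrite -scaleN1r; apply: subspaceZ. Qed.

Lemma is_zero_sub T : sub_set S T -> is_zero T -> is_zero S.
Proof. by move=> sST zT x; split=> [/sST/zT // | ->]; apply: subspace0. Qed.

End SubspaceTheory.

Lemma center_subspace : subspace (center br).
Proof.
split=> [y | x z cx cz y | a x cx y]; first exact: br0l.
- by rewrite brDl cx cz addr0.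
- by rewrite brZl cx scaler0.
Qed.

Lemma zero_subspace : subspace (fun x : V => x = 0).
Proof. by split=> [| x y -> -> | a x ->]; rewrite ?addr0 ?scaler0. Qed.

Lemma brsub_subspace A B : subspace (brsub br A B).
Proof.
split=> [S hS _ | x y hx hy S hS h | a x hx S hS h]; first exact: subspace0.
- by apply: subspaceD => //; [apply: hx | apply: hy].
- by apply: subspaceZ => //; apply: hx.
Qed.

Lemma brsub_br (A B : V -> Prop) a b : A a -> B b -> brsub br A B (br a b).
Proof. by move=> Aa Bb S _; apply. Qed.

Lemma brsub_mono (A B A' B' : V -> Prop) :
  sub_set A A' -> sub_set B B' -> sub_set (brsub br A B) (brsub br A' B').
Proof.
move=> sA sB v /(_ _ (brsub_subspace A' B')); apply=> a b Aa Bb.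
by apply: brsub_br; [apply: sA | apply: sB].
Qed.

Lemma brsub_br_indl (A B S : V -> Prop) y x : subspace S ->
  (forall a b, A a -> B b -> S (br (br a b) y)) -> brsub br A B x -> S (br x y).
Proof.
move=> hS hAB /(_ (fun v => S (br v y))); apply=> //.
split=> [| u w Su Sw | a u Su]; first by rewrite br0l; apply: subspace0.
- by rewrite brDl; apply: subspaceD.
- by rewrite brZl; apply: subspaceZ.
Qed.

Lemma brsub_br_indr (A B S : V -> Prop) y x : subspace S ->
  (forall a b, A a -> B b -> S (br y (br a b))) -> brsub br A B x -> S (br y x).
Proof.
move=> hS hAB /(_ (fun v => S (br y v))); apply=> //.
split=> [| u w Su Sw | a u Su]; first by rewrite br0r; apply: subspace0.
- by rewrite brDr; apply: subspaceD.
- by rewrite brZr; apply: subspaceZ.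
Qed.

Lemma brsub_ideal A B : ideal br A -> ideal br B -> ideal br (brsub br A B).
Proof.
move=> [_ iA] [_ iB]; split=> [|x y ABy]; first exact: brsub_subspace.
apply: brsub_br_indr ABy; first exact: brsub_subspace.
move=> a b Aa Bb; rewrite br_jacobi.
by apply: (subspaceD (brsub_subspace A B));
  [apply: brsub_br (iA _ _ Aa) Bb | apply: brsub_br Aa (iB _ _ Bb)].
Qed.

Lemma brsub_center_eq0 (A B : V -> Prop) :
  sub_set B (center br) -> sub_set (brsub br A B) (fun x => x = 0).
Proof.
move=> Bc v /(_ _ zero_subspace); apply=> a b _ Bb.
by rewrite brC (Bc b Bb) oppr0.
Qed.

Lemma ideal_derived I k : ideal br I -> ideal br (derived br I k).
Proof. by move=> hI; elim: k => [|k IH] //=; apply: brsub_ideal. Qed.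

Section LowerCentralSeries.
Variable N : V -> Prop.
Hypothesis hN : ideal br N.

Lemma ideal_lcs k : ideal br (lcs br N k).
Proof. by elim: k => [|[|k] IH] //=; apply: brsub_ideal. Qed.

Lemma lcs_succ_sub k : sub_set (lcs br N k.+1) (lcs br N k).
Proof.
elim: k => [|[|k] IH] //; last exact: brsub_mono.
by move=> v /(_ _ (proj1 hN)); apply=> a b _; apply: (proj2 hN).
Qed.

Lemma lcs_antitone m n : (m <= n)%N -> sub_set (lcs br N n) (lcs br N m).
Proof.
move/subnKC <-; elim: (n - m)%N => [|d IH]; first by rewrite addn0.
by move=> v; rewrite addnS => /lcs_succ_sub /IH.
Qed.

Lemma br_lcs2_lcs j u w :
  lcs br N 2 u -> lcs br N j.+1 w -> lcs br N j.+3 (br u w).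
Proof.
move=> C2u Cw; apply: brsub_br_indl C2u; first exact: brsub_subspace.
move=> a b Na Nb; rewrite br_commutator.
have C3 := brsub_subspace N (lcs br N j.+2).
apply: (subspaceD C3); last apply: (subspaceN C3).
  by apply: (brsub_br Na); apply: (brsub_br Nb Cw).
by apply: (brsub_br Nb); apply: (brsub_br Na Cw).
Qed.

End LowerCentralSeries.

Section AbelianIdealsCentral.
Hypothesis hab :
  forall I : V -> Prop, ideal br I -> abelian_sub br I -> sub_set I (center br).

Lemma derived_last_center r n :
  ideal br r -> is_zero (derived br r n.+1) -> sub_set (derived br r n) (center br).
Proof.
move=> hr zD; apply: hab; first exact: ideal_derived.
by move=> a b Da Db; apply/zD; apply: brsub_br.
Qed.

Section NilpotentIdeal.
Variable N : V -> Prop.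
Hypothesis hN : ideal br N.

Lemma lcs_abelian_center j :
  is_zero (lcs br N j.+4) -> sub_set (lcs br N j.+2) (center br).
Proof.
move=> zC; apply: hab; first exact: ideal_lcs.
move=> u w Cu Cw; apply/zC; apply: br_lcs2_lcs Cw.
exact: lcs_antitone Cu.
Qed.

Lemma lcs_eq0_pred j : is_zero (lcs br N j.+4) -> is_zero (lcs br N j.+3).
Proof.
move=> zC; apply: (is_zero_sub (ideal_lcs hN j.+3).1 (T := fun x => x = 0)) => //.
exact/brsub_center_eq0/lcs_abelian_center.
Qed.

Lemma nilpotent_lcs3_eq0 : nilpotent_sub br N -> is_zero (lcs br N 3).
Proof.
case=> n [_ zCn].
have : is_zero (lcs br N (n + 3)).
  by apply: (is_zero_sub (ideal_lcs hN _).1 _ zCn); exact: lcs_antitone (leq_addr _ _).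
rewrite addn3; elim: n {zCn} => [|n IH] // /lcs_eq0_pred; exact: IH.
Qed.

Lemma nilpotent_lcs2_center : nilpotent_sub br N -> sub_set (lcs br N 2) (center br).
Proof.
move/nilpotent_lcs3_eq0 => zC3; apply: (lcs_abelian_center (j := 0)).
by apply: is_zero_sub zC3; [exact: (ideal_lcs hN 4).1 | exact: lcs_succ_sub].
Qed.

End NilpotentIdeal.

Lemma center_of_ad_center x : (forall y, center br (br x y)) -> center br x.
Proof.
move=> xgc.
pose I v := exists a z, center br z /\ v = a *: x + z.
have Ix : I x by exists 1, 0; split; [exact: br0l | rewrite scale1r addr0].
apply: (hab (I := I)) Ix; first split.
- split=> [| u w | c u].
  + by exists 0, 0; split; [exact: br0l | rewrite scale0r addr0].
  + move=> [a [z [cz ->]]] [b [z' [cz' ->]]]; exists (a + b), (z + z').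
    by split; [exact: (subspaceD center_subspace cz cz') | rewrite scalerDl addrACA].
  + move=> [a [z [cz ->]]]; exists (c * a), (c *: z).
    by split; [exact: (subspaceZ center_subspace _ cz) | rewrite scalerDr scalerA].
- move=> w v [a [z [cz ->]]]; exists 0, (br w (a *: x + z)).
  split; last by rewrite scale0r add0r.
  rewrite brDr brZr (brC w x) (brC w z) cz oppr0 addr0.
  by apply: (subspaceZ center_subspace); apply: (subspaceN center_subspace).
- move=> u w [a [z [cz ->]]] [b [z' [cz' ->]]].
  rewrite brDl brZl cz addr0 brDr brZr brxx scaler0 add0r.
  by rewrite (brC x z') cz' oppr0 scaler0.
Qed.

End AbelianIdealsCentral.
End LieBracket.

Theorem lemma1p4 (K : fieldType) (V : lmodType K) (br : V -> V -> V)
  (hL : is_lie br)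
  (hab : forall I : V -> Prop, ideal br I -> abelian_sub br I -> sub_set I (center br)) :
  (* (a) *)
  (forall n : V -> Prop, ideal br n -> nilpotent_sub br n ->
     sub_set (lcs br n 2) (center br) /\ is_zero (lcs br n 3)) /\
  (* (b) *)
  (forall (r : V -> Prop) (n : nat), ideal br r -> solvable_sub br r ->
     ~ is_zero (derived br r n) ->
     (forall m : nat, ~ is_zero (derived br r m) -> (m <= n)%N) ->
     sub_set (derived br r n) (center br)) /\
  (* (c) *)
  ad_center_trivial br /\
  (* (d) *)
  (nilpotent_sub br (fun _ => True) -> forall x y : V, br x y = 0%R).
Proof.
split; [|split; [|split]].
- move=> N hN nilN.
  by split; [exact: nilpotent_lcs2_center | exact: nilpotent_lcs3_eq0].
- (* D^(n+1) r = 0 by maximality of n. *)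
  move=> r n hr _ _ maxn; apply: derived_last_center => //.
  by apply: NNPP => /maxn; rewrite ltnn.
- move=> x adx; apply: functional_extensionality => v.
  apply: center_of_ad_center => // y z.
  by rewrite br_commutator //; apply: (equal_f (adx y)).
- move=> nilg x; apply: center_of_ad_center => // y.
  by apply: (nilpotent_lcs2_center hL hab (N := fun _ => True)) => //; apply: brsub_br.
Qed.
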